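(* Let $n$ be even, $k>1$, and let $f=a_1+2a_2+\cdots+2^{k-1}a_k\in\mathcal{GB}_n^{2^k}$ with $a_1,\dots,a_k\in\mathcal{B}_n$ be gbent. Then for every $\mathbf{c}=(c_1,\dots,c_{k-1})\in\mathbb{F}_2^{k-1}$ the Boolean function $g_{\mathbf{c}}=c_1a_1\oplus c_2a_2\oplus\cdots\oplus c_{k-1}a_{k-1}\oplus a_k$ is bent.
   Context: $\mathcal{B}_n$: Boolean functions $\mathbb{F}_2^n\to\mathbb{F}_2$; $\mathcal{GB}_n^q$: functions $\mathbb{F}_2^n\to\mathbb{Z}_q$; every $f\in\mathcal{GB}_n^{2^k}$ is uniquely written as $f=\sum_{i=1}^k 2^{i-1}a_i$ (binary digits, $a_i\in\mathcal{B}_n$). $\mathcal{H}^{(q)}_f(\mathbf{u})=\sum_{\mathbf{x}}\zeta_q^{f(\mathbf{x})}(-1)^{\mathbf{u}\cdot\mathbf{x}}$ with $\zeta_q=e^{2\pi i/q}$; $f$ is gbent if $|\mathcal{H}^{(q)}_f(\mathbf{u})|=2^{n/2}$ for all $\mathbf{u}$. $g\in\mathcal{B}_n$ is bent if $|\sum_{\mathbf{x}}(-1)^{g(\mathbf{x})+\mathbf{u}\cdot\mathbf{x}}|=2^{n/2}$ for all $\mathbf{u}$. *)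

From HB Require Import structures.
From mathcomp Require Import all_boot all_order all_algebra all_field.
Set Implicit Arguments. Unset Strict Implicit. Unset Printing Implicit Defensive.
Import Order.TTheory GRing.Theory Num.Theory.
Local Open Scope ring_scope.

Definition vec (n : nat) := 'rV['F_2]_n.

Definition boolfun (n : nat) := vec n -> 'F_2.

Definition dotF2 (n : nat) (u x : vec n) : 'F_2 := \sum_(i < n) u 0 i * x 0 i.

Definition sgn (b : 'F_2) : algC := (-1) ^+ (nat_of_ord b).

Definition walsh (n : nat) (g : boolfun n) (u : vec n) : algC :=
  \sum_(x : vec n) sgn (g x + dotF2 u x).

Definition is_bent (n : nat) (g : boolfun n) : Prop :=
  forall u : vec n, `|walsh g u| = sqrtC (2%:R ^+ n).

(* generalized Boolean function into Z_q, represented by a natural-number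
   valued function (values taken modulo q, through zeta ^+ _ with zeta^q = 1) *)
Definition gwalsh (n : nat) (zeta : algC) (f : vec n -> nat) (u : vec n) : algC :=
  \sum_(x : vec n) zeta ^+ (f x) * sgn (dotF2 u x).

Definition is_gbent (n : nat) (zeta : algC) (f : vec n -> nat) : Prop :=
  forall u : vec n, `|gwalsh zeta f u| = sqrtC (2%:R ^+ n).

(* f = a_1 + 2 a_2 + ... + 2^(k-1) a_k, with a_(i+1) = a i for i : 'I_k *)
Definition gb_of_digits (n k : nat) (a : 'I_k -> boolfun n) : vec n -> nat :=
  fun x => (\sum_(i < k) 2 ^ i * nat_of_ord (a i x))%N.

(* a_(i+1) as a function of the natural index i (0 outside 0 <= i < k) *)
Definition digit (n k : nat) (a : 'I_k -> boolfun n) (i : nat) : boolfun n :=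
  fun x => if insub i is Some j then a j x else 0.

(* g_c = c_1 a_1 + ... + c_(k-1) a_(k-1) + a_k, with c_(i+1) = c i *)
Definition gc_fun (n k : nat) (a : 'I_k -> boolfun n) (c : 'I_k.-1 -> 'F_2)
  : boolfun n :=
  fun x => \sum_(i < k.-1) c i * digit a i x + digit a k.-1 x.

(** Write [M = 2^(k-1)] and let [z] be a primitive [2M]-th root of unity.
Splitting off the top digit, [z^f = z^(f mod M) (-1)^(a_k)], so the gbent
transform at [u] is [H = sum_(t < M) D_t z^t] with integer coordinates [D_t]
collecting the signs [(-1)^(a_k(x) + u.x)] over the [x] with
[a_1 + ... + 2^(k-2) a_(k-1) = t].  In [Z[z]] the prime above 2 is [1 - z],
with [2 = (1 - z)^M * unit]; comparing [(1 - z)]-adic valuations in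
[H H^* = 2^n] shows that [2^(n/2)] divides [H], so every [D_t] is divisible
by [2^(n/2)].  Averaging [|sigma H|^2 = 2^n] over the Galois conjugates gives
[sum_t D_t^2 = 2^n], hence exactly one coordinate is nonzero and equals
[+-2^(n/2)].  The Walsh transform of [g_c] at [u] is [sum_t (-1)^(c.t) D_t],
whose modulus is therefore [2^(n/2)]. *)

From HB Require Import structures.
From mathcomp Require Import all_boot all_order all_algebra all_field.
From mathcomp Require Import zify ring lra.
Set Implicit Arguments. Unset Strict Implicit. Unset Printing Implicit Defensive.
Import Order.TTheory GRing.Theory Num.Theory.
Local Open Scope ring_scope.

Lemma F2_cases (b : 'F_2) : b = 0 \/ b = 1.
Proof.
case: b => [[|[|m]]] hm; first by left; apply: val_inj.
  by right; apply: val_inj.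
by [].
Qed.

Lemma pchar_F2 : (2%N \in [pchar 'F_2]).
Proof. exact: (pchar_Fp (isT : prime 2)). Qed.

Lemma oppF2 (x : 'F_2) : - x = x.
Proof. exact: (oppr_pchar2 pchar_F2). Qed.

Lemma natr2_F2 : (2%:R : 'F_2) = 0.
Proof. exact: (pchar_Fp_0 (isT : prime 2)). Qed.

Lemma F2_natr (b : 'F_2) : (val b)%:R = b.
Proof. by case: (F2_cases b) => ->. Qed.

Lemma sgnE (b : 'F_2) : sgn b = ((-1) ^+ val b : int)%:~R.
Proof. by rewrite /sgn rmorphXn /= rmorphN1. Qed.

Lemma sgnD (b1 b2 : 'F_2) : sgn (b1 + b2) = sgn b1 * sgn b2.
Proof.
by case: (F2_cases b1) => ->; case: (F2_cases b2) => ->;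
  rewrite /sgn /= ?expr0 ?expr1 ?mulr1 ?mul1r ?mulrNN ?mulr1.
Qed.

Lemma norm_sgn (b : 'F_2) : `|sgn b| = 1.
Proof. by rewrite /sgn normrX normrN1 expr1n. Qed.

Section TwoPowerCyclotomic.

Variable K : nat.
Let M := (2 ^ K)%N.
Variable z : algC.
Hypothesis z_prim : (2 * M)%N.-primitive_root z.

Lemma M_gt0 : (0 < M)%N.
Proof. by rewrite /M expn_gt0. Qed.

Lemma expz_order : z ^+ (2 * M) = 1.
Proof. exact: prim_expr_order z_prim. Qed.

Lemma expz_half : z ^+ M = -1.
Proof.
have : (z ^+ M) ^+ 2 == 1 by rewrite -exprM mulnC expz_order.
rewrite sqrf_eq1 => /orP [|/eqP //].
rewrite -(prim_order_dvd z_prim) => /(dvdn_leq M_gt0).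
by rewrite -{2}(mul1n M) leq_mul2r; have := M_gt0; lia.
Qed.

Lemma norm_unity_root (v : algC) : v ^+ (2 * M) = 1 -> `|v| = 1.
Proof.
move=> hv; apply/eqP; rewrite -(pexpr_eq1 (n := (2 * M)%N)) //.
  by rewrite -normrX hv normr1.
by rewrite muln_gt0 M_gt0.
Qed.

Lemma conj_unity_root_exp (v : algC) (t : nat) :
  v ^+ (2 * M) = 1 -> (t <= 2 * M)%N -> (v ^+ t)^* = v ^+ (2 * M - t).
Proof.
move=> hv ht.
have v_neq0 : v != 0 by rewrite -normr_gt0 norm_unity_root.
have conj_v : v^* = v^-1 by rewrite invC_norm norm_unity_root // expr1n invr1 mul1r.
have -> : (v ^+ t)^* = v^* ^+ t by rewrite rmorphXn.
rewrite conj_v exprVn.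
have [->|ltt] := eqVneq t (2 * M)%N; first by rewrite subnn hv invr1 expr0.
by rewrite expfB ?hv ?mul1r // ltn_neqAle ltt ht.
Qed.

Lemma sum_odd_roots_exp (e : nat) : (M < e)%N -> (e < 3 * M)%N ->
  \sum_(i < M) (z ^+ (2 * i + 1)) ^+ e = if e == (2 * M)%N then M%:R else 0.
Proof.
move=> lt_M_e lt_e_3M.
have [->|e_neq] := eqVneq e (2 * M)%N.
  under eq_bigr => i _ do rewrite -exprM mulnC exprM expz_order expr1n.
  by rewrite sumr_const card_ord.
under eq_bigr => i _ do
  (have -> : (z ^+ (2 * i + 1)) ^+ e = z ^+ e * (z ^+ (2 * e)) ^+ i by
     rewrite -!exprM -exprD; congr (_ ^+ _); lia).
rewrite -mulr_sumr; set q := z ^+ (2 * e).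
have q_neq1 : q != 1.
  rewrite /q -(prim_order_dvd z_prim) dvdn_pmul2l //.
  apply/negP => /dvdnP [c ec]; move: lt_M_e lt_e_3M e_neq; rewrite ec => h1 h2.
  have c_gt1 : (1 < c)%N by rewrite -(ltn_pmul2r M_gt0) mul1n.
  have c_lt3 : (c < 3)%N by rewrite -(ltn_pmul2r M_gt0).
  have -> : c = 2%N by lia.
  by rewrite eqxx.
have qM : q ^+ M = 1 by rewrite /q -exprM mulnAC exprM expz_order expr1n.
have : (q - 1) * (\sum_(i < M) q ^+ i) = 0 by rewrite -subrX1 qM subrr.
by move/eqP; rewrite mulf_eq0 subr_eq0 (negbTE q_neq1) => /eqP ->; rewrite mulr0.
Qed.

(** * Coordinates in the power basis of [Z[z]] *)

Definition coord_eval (v : algC) (d : 'I_M -> int) : algC :=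
  \sum_(t < M) (d t)%:~R * v ^+ t.

Definition zeval (d : 'I_M -> int) : algC := coord_eval z d.

Lemma conj_coord_eval (v : algC) (d : 'I_M -> int) : v ^+ (2 * M) = 1 ->
  (coord_eval v d)^* = \sum_(t < M) (d t)%:~R * v ^+ (2 * M - t).
Proof.
move=> hv; rewrite /coord_eval rmorph_sum; apply: eq_bigr => t _.
by rewrite rmorphM /= rmorph_int conj_unity_root_exp //; have := ltn_ord t; lia.
Qed.

Lemma sum_norm_coord_eval (d : 'I_M -> int) :
  \sum_(i < M) `|coord_eval (z ^+ (2 * i + 1)) d| ^+ 2 =
  M%:R * \sum_(t < M) (d t)%:~R ^+ 2.
Proof.
have expand (i : 'I_M) : `|coord_eval (z ^+ (2 * i + 1)) d| ^+ 2 =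
   \sum_(s < M) \sum_(t < M) (d s)%:~R * (d t)%:~R *
       (z ^+ (2 * i + 1)) ^+ (s + (2 * M - t)).
  set v := z ^+ (2 * i + 1).
  have hv : v ^+ (2 * M) = 1 by rewrite -exprM mulnC exprM expz_order expr1n.
  rewrite normCK conj_coord_eval // /coord_eval big_distrl /=.
  apply: eq_bigr => s _; rewrite big_distrr /=; apply: eq_bigr => t _.
  by rewrite exprD; ring.
under eq_bigr => i _ do rewrite expand.
rewrite exchange_big big_distrr /=; apply: eq_bigr => s _.
rewrite exchange_big (bigD1 s) //= [X in _ + X]big1 ?addr0.
  have -> : (s + (2 * M - s))%N = (2 * M)%N by have := ltn_ord s; lia.
  rewrite -mulr_sumr sum_odd_roots_exp ?eqxx; try by have := M_gt0; lia.
  by rewrite mulrC expr2.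
move=> t ts; rewrite -mulr_sumr sum_odd_roots_exp;
  try by have := ltn_ord s; have := ltn_ord t; lia.
case: eqP; last by rewrite mulr0.
by move: ts; rewrite -val_eqE /=; have := ltn_ord t; have := ltn_ord s; lia.
Qed.

Lemma unity_aut_exists (i : nat) :
  exists u : {rmorphism algC -> algC}, u z = z ^+ (2 * i + 1).
Proof.
have co : coprime (2 * i + 1) (2 * M).
  by rewrite /M -expnS; apply: coprimeXr; rewrite coprimen2 oddD oddM.
have [u hu] := Qn_aut_exists co.
by exists u; apply: hu; exact: expz_order.
Qed.

Lemma rmorph_zeval (u : {rmorphism algC -> algC}) (d : 'I_M -> int) :
  u (zeval d) = coord_eval (u z) d.
Proof.
rewrite /zeval /coord_eval rmorph_sum; apply: eq_bigr => t _.
by rewrite rmorphM rmorph_int rmorphXn.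
Qed.

Lemma rmorph_conj_zeval (u : {rmorphism algC -> algC}) (d : 'I_M -> int) :
  u (zeval d)^* = (u (zeval d))^*.
Proof.
have hu : (u z) ^+ (2 * M) = 1 by rewrite -rmorphXn expz_order rmorph1.
rewrite rmorph_zeval conj_coord_eval // /zeval conj_coord_eval ?expz_order //.
by rewrite rmorph_sum; apply: eq_bigr => t _; rewrite rmorphM rmorph_int rmorphXn.
Qed.

(* Each Galois conjugate of [zeval d] has the same norm, and
   [sum_norm_coord_eval] averages the norms over all conjugates. *)
Lemma sum_sq_coords (d : 'I_M -> int) (m : nat) :
  zeval d * (zeval d)^* = m%:R -> \sum_(t < M) d t ^+ 2 = m%:Z.
Proof.
move=> hnorm.
have := sum_norm_coord_eval d.
under eq_bigr => i _ do
  (have -> : `|coord_eval (z ^+ (2 * i + 1)) d| ^+ 2 = m%:R by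
     have [u <-] := unity_aut_exists i;
     by rewrite normCK -rmorph_zeval -rmorph_conj_zeval -rmorphM hnorm rmorph_nat).
have M_neq0 : (M%:R : algC) != 0 by rewrite pnatr_eq0 -lt0n M_gt0.
rewrite sumr_const card_ord -[_ *+ M]mulr_natl => /(mulfI M_neq0) hm.
apply: (@intr_inj algC); rewrite rmorph_sum -[RHS]/(m%:R : algC) hm.
by apply: eq_bigr => t _; rewrite rmorphXn.
Qed.

Lemma zeval_inj (d e : 'I_M -> int) : zeval d = zeval e -> d =1 e.
Proof.
move=> hde t; apply/eqP; rewrite -subr_eq0; apply/eqP.
pose f t := d t - e t.
have hf : zeval f * (zeval f)^* = 0%:R.
  suff -> : zeval f = zeval d - zeval e by rewrite hde subrr mul0r.
  rewrite /zeval /coord_eval -sumrB.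
  by apply: eq_bigr => s _; rewrite rmorphB mulrBl.
move/sum_sq_coords/eqP : hf; rewrite psumr_eq0 => [/allP/(_ t (mem_index_enum t))|s _].
  by rewrite sqrf_eq0 => /eqP.
exact: sqr_ge0.
Qed.

Lemma zeval_scale (c : int) (d : 'I_M -> int) :
  c%:~R * zeval d = zeval (fun t => c * d t).
Proof.
by rewrite /zeval /coord_eval mulr_sumr; apply: eq_bigr => t _; rewrite rmorphM mulrA.
Qed.

(** * The residue map [Z[z] -> Z[z]/(1 - z) = F_2] *)

Definition coord_parity (d : 'I_M -> int) : 'F_2 := \sum_(t < M) (d t)%:~R.

(* [x] lies in [Z[z]] and is congruent to [b] modulo [1 - z]. *)
Definition residue (x : algC) (b : 'F_2) :=
  exists d, x = zeval d /\ coord_parity d = b.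

Definition in_Zz (x : algC) := exists b, residue x b.

(* The coordinates of [z^m]: [z^m = (-1)^(m / M) z^(m mod M)]. *)
Definition coord_exp (m : nat) : 'I_M -> int :=
  fun t => if val t == (m %% M)%N then (-1) ^+ (m %/ M)%N else 0.

Lemma zeval_coord_exp (m : nat) : zeval (coord_exp m) = z ^+ m.
Proof.
rewrite /zeval /coord_eval (bigD1 (Ordinal (ltn_pmod m M_gt0))) //= big1.
  rewrite /coord_exp /= eqxx addr0 {3}(divn_eq m M) exprD mulnC exprM expz_half.
  by rewrite rmorphXn /= rmorphN1.
by move=> t /negbTE; rewrite -val_eqE /= /coord_exp => ->; rewrite mul0r.
Qed.

Lemma coord_parity_exp (m : nat) : coord_parity (coord_exp m) = 1.
Proof.
rewrite /coord_parity (bigD1 (Ordinal (ltn_pmod m M_gt0))) //= big1.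
  by rewrite /coord_exp /= eqxx addr0 rmorphXn rmorphN1 oppF2 expr1n.
by move=> t /negbTE; rewrite -val_eqE /= /coord_exp => ->.
Qed.

Lemma residue_int_comb (I : finType) (c : I -> int) (m : I -> nat) :
  residue (\sum_i (c i)%:~R * z ^+ (m i)) (\sum_i (c i)%:~R).
Proof.
exists (fun t => \sum_i c i * coord_exp (m i) t); split.
  rewrite /zeval /coord_eval.
  under [RHS]eq_bigr => t _ do rewrite rmorph_sum /= mulr_suml.
  rewrite exchange_big /=; apply: eq_bigr => i _.
  rewrite -zeval_coord_exp /zeval /coord_eval mulr_sumr; apply: eq_bigr => t _.
  by rewrite rmorphM /= mulrA.
rewrite /coord_parity; under eq_bigr => t _ do rewrite rmorph_sum.
rewrite exchange_big /=; apply: eq_bigr => i _.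
under eq_bigr => t _ do rewrite rmorphM.
by rewrite -mulr_sumr -[X in _ * X]/(coord_parity _) coord_parity_exp mulr1.
Qed.

Lemma residue_exp_z (m : nat) : residue (z ^+ m) 1.
Proof. by exists (coord_exp m); rewrite zeval_coord_exp coord_parity_exp. Qed.

Lemma residue_int (c : int) : residue c%:~R c%:~R.
Proof.
have := residue_int_comb (fun _ : 'I_1 => c) (fun _ => 0%N).
by rewrite !big_ord1 expr0 mulr1.
Qed.

Lemma residue1 : residue 1 1.
Proof. by have := residue_int 1; rewrite !rmorph1. Qed.

Lemma residue2 : residue 2%:R 0.
Proof. by rewrite -natr2_F2; exact: residue_int 2%:Z. Qed.

Lemma residueD x y b b' : residue x b -> residue y b' -> residue (x + y) (b + b').
Proof.
move=> [d [-> <-]] [e [-> <-]]; exists (fun t => d t + e t); split.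
  rewrite /zeval /coord_eval -big_split.
  by apply: eq_bigr => t _; rewrite rmorphD mulrDl.
by rewrite /coord_parity -big_split; apply: eq_bigr => t _; rewrite rmorphD.
Qed.

Lemma residueN x b : residue x b -> residue (- x) b.
Proof.
move=> [d [-> <-]]; exists (fun t => - d t); split.
  rewrite /zeval /coord_eval -sumrN.
  by apply: eq_bigr => t _; rewrite rmorphN mulNr.
by rewrite /coord_parity; apply: eq_bigr => t _; rewrite rmorphN oppF2.
Qed.

Lemma residueM x y b b' : residue x b -> residue y b' -> residue (x * y) (b * b').
Proof.
move=> [d [-> <-]] [e [-> <-]].
have := residue_int_comb (fun p : 'I_M * 'I_M => d p.1 * e p.2)
                         (fun p => (val p.1 + val p.2)%N).
rewrite -(pair_bigA _ (fun s t : 'I_M => (d s * e t)%:~R * z ^+ (s + t)%N)).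
rewrite -(pair_bigA _ (fun s t : 'I_M => (d s * e t)%:~R : 'F_2)).
rewrite /zeval /coord_eval /coord_parity !big_distrlr /=.
congr residue; apply: eq_bigr => s _; apply: eq_bigr => t _; rewrite rmorphM //.
by rewrite exprD; ring.
Qed.

Lemma residueX x b m : residue x b -> residue (x ^+ m) (b ^+ m).
Proof.
move=> hx; elim: m => [|m IH]; first by rewrite !expr0; exact: residue1.
by rewrite !exprS; apply: residueM.
Qed.

Lemma residue_conj x b : residue x b -> residue x^* b.
Proof.
move=> [d [-> <-]].
have := residue_int_comb d (fun t : 'I_M => (2 * M - t)%N).
by congr residue; rewrite /zeval conj_coord_eval // expz_order.
Qed.

Lemma residue_uniq x b b' : residue x b -> residue x b' -> b = b'.
Proof.
move=> [d [-> <-]] [e [hde <-]].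
by rewrite /coord_parity; apply: eq_bigr => t _; rewrite (zeval_inj hde).
Qed.

Lemma residue_sum (I : finType) (F : I -> algC) (b : I -> 'F_2) :
  (forall i, residue (F i) (b i)) -> residue (\sum_i F i) (\sum_i b i).
Proof.
move=> hF; elim/big_rec2: _ => [|i y c _ hy]; last exact: residueD.
by have := residue_int 0; rewrite !rmorph0.
Qed.

Lemma residue_sum_exp (m : nat) : residue (\sum_(i < m) z ^+ i) m%:R.
Proof.
have := residue_sum (fun i : 'I_m => residue_exp_z i).
by rewrite sumr_const card_ord.
Qed.

(** * Divisibility by [p = 1 - z] *)

Let p := 1 - z.

Lemma residue_p : residue p 0.
Proof.
have := residueD residue1 (residueN (residue_exp_z 1)).
by rewrite expr1 -(natrD _ 1 1) natr2_F2.
Qed.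

Lemma p_neq0 : p != 0.
Proof.
rewrite subr_eq0 eq_sym -[z]expr1 -(prim_order_dvd z_prim).
by apply/negP => /dvdn_leq; have := M_gt0; lia.
Qed.

Lemma residue0_dvd x : residue x 0 -> exists y, in_Zz y /\ x = p * y.
Proof.
move=> [d [-> hd]].
move: hd => /eqP; rewrite /coord_parity -rmorph_sum -(dvdz_pcharf pchar_F2).
move=> /dvdzP [q hq].
have two_p : 2%:R = p * \sum_(i < M) z ^+ i.
  by have := subrX1 z M; rewrite expz_half /p => h; rewrite -opprB mulNr -h; ring.
exists (q%:~R * \sum_(i < M) z ^+ i - \sum_(t < M) (d t)%:~R * \sum_(i < t) z ^+ i).
split.
  eexists; apply: residueD (residueM (residue_int q) (residue_sum_exp M)) _.
  apply/residueN/residue_sum => t.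
  exact: residueM (residue_int (d t)) (residue_sum_exp t).
rewrite mulrBr mulrCA -two_p mulr_sumr.
have -> : \sum_(t < M) p * ((d t)%:~R * \sum_(i < t) z ^+ i) =
          \sum_(t < M) ((d t)%:~R - (d t)%:~R * z ^+ t).
  by apply: eq_bigr => t _; rewrite mulrCA /p -opprB mulNr -subrX1; ring.
rewrite sumrB -rmorph_sum hq rmorphM /=; rewrite /zeval /coord_eval.
by have -> : ((2%:Z)%:~R : algC) = 2%:R by []; ring.
Qed.

Lemma pow2_one_sub_z (b : nat) :
  exists w, residue w 0 /\ p ^+ (2 ^ b) = 1 - z ^+ (2 ^ b) + 2%:R * w.
Proof.
elim: b => [|b [w [hw IH]]].
  exists 0; split; last by rewrite expn0 !expr1 mulr0 addr0.
  by have := residue_int 0; rewrite !rmorph0.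
set y := z ^+ (2 ^ b).
exists (y ^+ 2 - y + 2%:R * w * (1 - y) + 2%:R * w ^+ 2); split.
  have hy := residue_exp_z (2 ^ b); have hy2 := residue_exp_z (2 ^ b * 2).
  rewrite exprM -/y in hy2.
  have := residueD (residueD (residueD hy2 (residueN hy))
    (residueM (residueM residue2 hw) (residueD residue1 (residueN hy))))
    (residueM residue2 (residueX 2 hw)).
  by rewrite -(natrD _ 1 1) natr2_F2 !mul0r !addr0.
by rewrite expnSr exprM IH exprM -/y; ring.
Qed.

Lemma pow_p_half : exists w, residue w 0 /\ p ^+ M = 2%:R * (1 + w).
Proof.
have [w [hw hpM]] := pow2_one_sub_z K.
by exists w; split; rewrite // -/M hpM expz_half; ring.
Qed.

Lemma residue1_neq_p_mul y x m :
  residue y 1 -> in_Zz x -> (0 < m)%N -> y != p ^+ m * x.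
Proof.
move=> hy [b hx] m_gt0; apply/eqP => eyx.
have := residueM (residueX m residue_p) hx.
rewrite -eyx expr0n gtn_eqF // mul0r => /(residue_uniq hy) /eqP.
by rewrite oner_eq0.
Qed.

Lemma p_adic_split x (B : nat) : in_Zz x ->
  (forall r y, in_Zz y -> x = p ^+ r * y -> (r <= B)%N) ->
  exists r y, residue y 1 /\ x = p ^+ r * y.
Proof.
move=> hx hB.
suff desc m r y : (B - r <= m)%N -> in_Zz y -> x = p ^+ r * y ->
    exists r' y', residue y' 1 /\ x = p ^+ r' * y'.
  by apply: (desc B 0%N x) => //; rewrite ?subn0 // expr0 mul1r.
elim: m r y => [|m IH] r y hm [b hy] hxy.
all: have [eb|eb] := F2_cases b; rewrite eb in hy; last by exists r, y.
all: have [y' [hy' ey]] := residue0_dvd hy.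
all: have hxy' : x = p ^+ r.+1 * y' by rewrite hxy ey exprSr mulrA.
all: have := hB _ _ hy' hxy'.
- by lia.
- by move=> ?; apply: (IH r.+1 y') => //; lia.
Qed.

Lemma conj_p : p^* = - z^* * p.
Proof.
have zz : z^* * z = 1 by rewrite -normCKC norm_unity_root ?expr1n ?expz_order.
by rewrite /p rmorphB rmorph1 mulrBr mulr1 mulNr zz; ring.
Qed.

Lemma residue_norm_cofactor y w b (r m : nat) : residue y b -> residue w 0 ->
  residue (y * ((- z^*) ^+ r * y^*) * (1 + w) ^+ m) b.
Proof.
move=> hy hw; have hz : residue (- z^*) 1.
  by rewrite -[z]expr1; exact/residueN/residue_conj/residue_exp_z.
have := residueM (residueM hy (residueM (residueX r hz) (residue_conj hy)))
                 (residueX m (residueD residue1 hw)).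
by rewrite addr0 !expr1n mul1r !mulr1; case: (F2_cases b) => ->; rewrite ?mul0r ?mulr1.
Qed.

Lemma pow_p_norm_split x y w (r n2 : nat) :
  p ^+ M = 2%:R * (1 + w) -> x * x^* = 2%:R ^+ (2 * n2) -> x = p ^+ r * y ->
  p ^+ (M * (2 * n2)) = p ^+ (2 * r) * (y * ((- z^*) ^+ r * y^*) * (1 + w) ^+ (2 * n2)).
Proof.
move=> hpM hnorm hxy; rewrite exprM hpM exprMn -hnorm hxy rmorphM rmorphXn /=.
by rewrite conj_p exprMn (mul2n r) -addnn exprD; ring.
Qed.

(* Valuations: [x x^* = 2^(2 n2) = p^(2 M n2) * unit], and [x^*] has the
   same [p]-valuation as [x] since [p^* = - z^* p]. *)
Lemma dvd_pow2_of_norm (x : algC) (n2 : nat) :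
  in_Zz x -> x * x^* = 2%:R ^+ (2 * n2) ->
  exists y, in_Zz y /\ x = 2%:R ^+ n2 * y.
Proof.
move=> hx hnorm.
have [w [hw hpM]] := pow_p_half.
set N := (M * (2 * n2))%N.
pose Q r y := y * ((- z^*) ^+ r * y^*) * (1 + w) ^+ (2 * n2).
have residue_Q r y b : residue y b -> residue (Q r y) b.
  by move=> hy; exact: residue_norm_cofactor hy hw.
have split_norm r y : x = p ^+ r * y -> p ^+ N = p ^+ (2 * r) * Q r y.
  exact: pow_p_norm_split.
have pX_neq0 m : p ^+ m != 0 by rewrite expf_neq0 // p_neq0.
have bound r y : in_Zz y -> x = p ^+ r * y -> (2 * r <= N)%N.
  move=> [b hy] /split_norm; rewrite leqNgt; apply: contraPN => lt_N.
  have -> : (2 * r = N + (2 * r - N))%N by lia.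
  rewrite exprD -mulrA -{1}[p ^+ N]mulr1 => /(mulfI (pX_neq0 N)) /eqP.
  by apply/negP/residue1_neq_p_mul; [exact: residue1 | exists b; exact: residue_Q | lia].
have [r [y [hy hxy]]] : exists r y, residue y 1 /\ x = p ^+ r * y.
  by apply: (p_adic_split (B := N)) => // r y hy /(bound _ _ hy); lia.
have e_r : r = (M * n2)%N.
  suff : (2 * r = N)%N by lia.
  have := bound r y (ex_intro _ 1 hy) hxy.
  rewrite leq_eqVlt => /orP [/eqP //| lt_N]; exfalso.
  move: (split_norm r y hxy).
  have -> : N = (2 * r + (N - 2 * r))%N by lia.
  rewrite exprD -[p ^+ (N - 2 * r)]mulr1 => /(mulfI (pX_neq0 _)) /esym /eqP.
  apply/negP/residue1_neq_p_mul; first exact: residue_Q.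
    by exists 1; exact: residue1.
  by lia.
exists ((1 + w) ^+ n2 * y); split.
  by eexists; apply: residueM (residueX n2 (residueD residue1 hw)) hy.
by rewrite hxy e_r exprM hpM exprMn mulrA.
Qed.

Lemma sum_sq_int_eq1 (I : finType) (v : I -> int) :
  \sum_i v i ^+ 2 = 1 -> exists s, `|v s| = 1 /\ forall t, t != s -> v t = 0.
Proof.
have [s v_s|v0] := pickP (fun s => v s != 0); last first.
  by rewrite big1 // => t _; move/negbFE/eqP: (v0 t) => ->; rewrite expr0n.
rewrite (bigD1 s) //= expr2; set r := \sum_(t | t != s) _ => hv.
have r_ge0 : 0 <= r by apply: sumr_ge0 => t _; exact: sqr_ge0.
have r0 : r = 0 by nia.
exists s; split.
  have : v s ^+ 2 == 1 by rewrite expr2; apply/eqP; nia.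
  by rewrite sqrf_eq1 => /orP [] /eqP ->; rewrite ?normrN1 ?normr1.
move=> t ts; move/eqP: r0; rewrite psumr_eq0 => [|i _]; last exact: sqr_ge0.
by move/allP/(_ t (mem_index_enum t)); rewrite ts sqrf_eq0 => /eqP.
Qed.

Lemma coords_of_norm_pow2 (D : 'I_M -> int) (n2 : nat) :
  zeval D * (zeval D)^* = 2%:R ^+ (2 * n2) ->
  exists s, `|D s| = 2 ^+ n2 /\ forall t, t != s -> D t = 0.
Proof.
move=> hnorm.
have [_ [[_ [v [-> _]]] hDv]] := dvd_pow2_of_norm (ex_intro _ _ (ex_intro _ D (conj erefl erefl))) hnorm.
have hD : D =1 (fun t => 2 ^+ n2 * v t).
  by apply: zeval_inj; rewrite -zeval_scale hDv rmorphXn.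
have sum_v : \sum_t v t ^+ 2 = 1.
  have : \sum_t D t ^+ 2 = (2 ^ (2 * n2))%N%:Z.
    by apply: sum_sq_coords; rewrite hnorm natrX.
  under eq_bigr => t _ do rewrite hD exprMn -exprM.
  rewrite -mulr_sumr -natz natrX mulnC -[RHS]mulr1 => /mulfI; apply.
  by rewrite expf_neq0.
have [s [vs_1 v0]] := sum_sq_int_eq1 sum_v.
exists s; split; first by rewrite hD normrM vs_1 mulr1 normrX.
by move=> t /v0; rewrite hD => ->; rewrite mulr0.
Qed.

End TwoPowerCyclotomic.

Lemma bin_expansion_lt (L : nat) (b : nat -> nat) : (forall j, b j <= 1)%N ->
  (\sum_(j < L) 2 ^ j * b j < 2 ^ L)%N.
Proof.
elim: L b => [|L IH] b hb; first by rewrite big_ord0.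
rewrite big_ord_recl /= expn0 mul1n.
have -> : (\sum_(i < L) 2 ^ bump 0 i * b (bump 0 i) =
          2 * \sum_(i < L) 2 ^ i * b i.+1)%N.
  by rewrite big_distrr /=; apply: eq_bigr => i _; rewrite /bump /= add1n expnS mulnA.
by have := IH (fun j => b j.+1) (fun j => hb j.+1); have := hb 0%N; rewrite expnS; lia.
Qed.

Lemma bin_expansion_digit (L : nat) (b : nat -> nat) : (forall j, b j <= 1)%N ->
  forall i, (i < L)%N -> ((\sum_(j < L) 2 ^ j * b j) %/ 2 ^ i %% 2 = b i)%N.
Proof.
elim: L b => [|L IH] b hb i hi //.
rewrite big_ord_recl /= expn0 mul1n.
have -> : (\sum_(i < L) 2 ^ bump 0 i * b (bump 0 i) =
          (\sum_(i < L) 2 ^ i * b i.+1) * 2)%N.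
  by rewrite big_distrl /=; apply: eq_bigr => j _; rewrite /bump /= add1n expnS; lia.
case: i hi => [|i] hi.
  by rewrite expn0 divn1 addnC modnMDl; have := hb 0%N; case: (b 0%N) => [|[|]].
rewrite expnS divnMA addnC divnMDl // (@divn_small (b 0%N)) ?addn0; last first.
  by have := hb 0%N; lia.
exact: (IH (fun j => b j.+1) (fun j => hb j.+1) i).
Qed.

Section DigitSplit.

Variables (n K : nat) (a : 'I_K.+1 -> boolfun n).
Let M := (2 ^ K)%N.

Definition low_digits (x : vec n) : nat := (\sum_(j < K) 2 ^ j * val (digit a j x))%N.

Lemma digit_le1 (x : vec n) (j : nat) : (val (digit a j x) <= 1)%N.
Proof. by have := ltn_ord (digit a j x). Qed.

Lemma low_digits_lt (x : vec n) : (low_digits x < M)%N.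
Proof. exact: bin_expansion_lt (digit_le1 x). Qed.

Definition low_class (x : vec n) : 'I_M := Ordinal (low_digits_lt x).

Lemma gb_of_digits_split (x : vec n) :
  gb_of_digits a x = (low_digits x + 2 ^ K * val (digit a K x))%N.
Proof.
have digitE (i : 'I_K.+1) : digit a i x = a i x by rewrite /digit valK.
rewrite /gb_of_digits big_ord_recr /= -(digitE ord_max); congr (_ + _)%N.
by apply: eq_bigr => j _; rewrite -(digitE (widen_ord (leqnSn K) j)).
Qed.

(* The integer coordinates [D_t] of the gbent transform in the basis [z^t]. *)
Definition class_sign_sum (u : vec n) (t : 'I_M) : int :=
  \sum_(x | low_class x == t) (-1) ^+ val (digit a K x + dotF2 u x).

Lemma gwalsh_class_sum (zeta : algC) (u : vec n) : zeta ^+ M = -1 ->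
  gwalsh zeta (gb_of_digits a) u = zeval zeta (class_sign_sum u).
Proof.
move=> zeta_M; rewrite /gwalsh (partition_big low_class xpredT) //=.
rewrite /zeval /coord_eval; apply: eq_bigr => t _.
rewrite /class_sign_sum rmorph_sum mulr_suml; apply: eq_bigr => x /eqP <-.
rewrite gb_of_digits_split exprD exprM zeta_M -[(-1) ^+ val (digit a K x)]/(sgn _).
by rewrite -mulrA -sgnD sgnE mulrC.
Qed.

Lemma walsh_gc_class_sum (c : 'I_K -> 'F_2) (u : vec n) :
  walsh (gc_fun a c) u = \sum_(t < M)
    sgn (\sum_(i < K) c i * (t %/ 2 ^ i %% 2)%N%:R) * (class_sign_sum u t)%:~R.
Proof.
rewrite /walsh (partition_big low_class xpredT) //=; apply: eq_bigr => t _.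
rewrite /class_sign_sum rmorph_sum mulr_sumr; apply: eq_bigr => x /eqP <-.
rewrite /gc_fun -addrA sgnD; congr (_ * _); last exact: sgnE.
congr sgn; apply: eq_bigr => i _.
by rewrite /= /low_digits (bin_expansion_digit (digit_le1 x) (ltn_ord i)) F2_natr.
Qed.

End DigitSplit.

Theorem mainTheorem13 (n k : nat) (zeta : algC)
  (hzeta : (2 ^ k)%N.-primitive_root zeta)
  (hn : ~~ odd n) (hk : (1 < k)%N)
  (a : 'I_k -> boolfun n)
  (hf : is_gbent zeta (gb_of_digits a)) :
  forall c : 'I_k.-1 -> 'F_2, is_bent (gc_fun a c).
Proof.
case: k hzeta hk a hf => [|K] // hzeta _ a hf c u.
have z_prim : (2 * 2 ^ K)%N.-primitive_root zeta by rewrite -expnS.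
have hn2 : n = (2 * n./2)%N.
  by rewrite -[n in LHS](odd_double_half n) (negbTE hn) add0n -mul2n.
have hnorm : zeval zeta (class_sign_sum a u) * (zeval zeta (class_sign_sum a u))^*
             = 2%:R ^+ (2 * n./2).
  by rewrite -gwalsh_class_sum ?(expz_half z_prim) // -normCK hf sqrtCK -hn2.
have [s [hDs hD0]] := coords_of_norm_pow2 z_prim hnorm.
rewrite walsh_gc_class_sum (bigD1 s) //= [X in _ + X]big1 ?addr0 => [|t /(hD0 t) ->]; last first.
  by rewrite mulr0.
have -> : (2%:R ^+ n : algC) = (2%:R ^+ n./2) ^+ 2 by rewrite -exprM mulnC -hn2.
by rewrite normrM norm_sgn mul1r -intr_norm hDs rmorphXn sqrCK // exprn_ge0 // ler0n.
Qed.
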